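(* Let $X,Y\subseteq\mathbb{P}^n$ be real closed subschemes with $X\cap Y=\operatorname{Span}(X)\cap\operatorname{Span}(Y)$. Then the Hankel spectrahedron $\Sigma_{X\cup Y}^*$ is the convex hull of $\Sigma_X^*\cup\Sigma_Y^*$, and both $\Sigma_X^*$ and $\Sigma_Y^*$ are faces of $\Sigma_{X\cup Y}^*$.
   Context: For a subscheme $Z\subseteq\mathbb{P}^n$ with ideal $I(Z)$, $\mathbb{R}[Z]=\mathbb{R}[x_0,\dots,x_n]/I(Z)$, $\Sigma_Z\subseteq\mathbb{R}[Z]_2$ is the cone of sums of squares of elements of $\mathbb{R}[Z]_1$ and $\Sigma_Z^*\subseteq\mathbb{R}[Z]_2^*$ its dual cone (the Hankel spectrahedron). $X\cup Y$ is defined by $I(X)\cap I(Y)$, and $\Sigma_X^*,\Sigma_Y^*$ are regarded as subsets of $\mathbb{R}[X\cup Y]_2^*$ via the duals of the restriction (quotient) maps $\pi_X:\mathbb{R}[X\cup Y]_2\to\mathbb{R}[X]_2$ and $\pi_Y:\mathbb{R}[X\cup Y]_2\to\mathbb{R}[Y]_2$. $\operatorname{Span}(Z)$ is the projective linear span of $Z$. *)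

From HB Require Import structures.
From mathcomp Require Import all_boot all_order all_algebra.
From mathcomp Require Import reals.
From mathcomp Require Import mpoly.
Set Implicit Arguments. Unset Strict Implicit. Unset Printing Implicit Defensive.
Import Order.TTheory GRing.Theory Num.Theory.
Local Open Scope ring_scope.

Section Defs.
Variables (R : realType) (n : nat).
(* Homogeneous coordinate ring of P^n: R[x_0, ..., x_n]. *)
Local Notation S := {mpoly R[n.+1]}.

Definition is_ideal (I : S -> Prop) : Prop :=
  [/\ I 0, (forall p q, I p -> I q -> I (p + q)) & (forall f p, I p -> I (f * p))].

Definition is_homogeneous (I : S -> Prop) : Prop :=
  forall p d, I p -> I (pihomog mdeg d p).

(* Saturation with respect to the irrelevant ideal (x_0,...,x_n):
   p is in sat J iff (x_0,...,x_n)^k p is contained in J for some k,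
   i.e. m * p \in J for all monomials m of degree k. *)
Definition sat (J : S -> Prop) : S -> Prop :=
  fun p => exists k : nat, forall m : 'X_{1..n.+1}, mdeg m = k -> J ('X_[m] * p).

Definition is_saturated (I : S -> Prop) : Prop := forall p, sat I p -> I p.

(* A closed subscheme of P^n (over R) is given by its saturated homogeneous
   ideal I(Z); we identify Z with I(Z). *)
Definition closed_subscheme (I : S -> Prop) : Prop :=
  [/\ is_ideal I, is_homogeneous I & is_saturated I].

Definition ideal_add (I J : S -> Prop) : S -> Prop :=
  fun p => exists a b, [/\ I a, J b & p = a + b].
Definition ideal_cap (I J : S -> Prop) : S -> Prop := fun p => I p /\ J p.

(* Ideal of Span(Z): generated by the linear forms in I(Z). *)
Definition span_ideal (I : S -> Prop) : S -> Prop :=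
  fun p => exists (k : nat) (g l : 'I_k -> S),
    (forall i, I (l i) /\ l i \is 1.-homog) /\ p = \sum_(i < k) g i * l i.

(* Two homogeneous ideals define the same closed subscheme of P^n iff they
   have the same saturation. *)
Definition same_subscheme (I J : S -> Prop) : Prop := forall p, sat I p <-> sat J p.

(* Linear functionals on S_2 (quadratic forms), represented by their values on
   the degree-2 monomials; [dual2] records that the functional is supported on
   degree-2 monomials. *)
Definition functional := 'X_{1..n.+1} -> R.
Definition dual2 (L : functional) : Prop := forall m, mdeg m != 2%N -> L m = 0.
Definition pair (L : functional) (p : S) : R := \sum_(m <- msupp p) p@_m * L m.

(* Hankel spectrahedron Sigma_Z^* (dual cone of sums of squares of linear forms
   in R[Z]_2), viewed inside S_2^* via the dual of S_2 -> R[Z]_2: the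
   functionals vanishing on I(Z)_2 and nonnegative on sums of squares of
   linear forms. *)
Definition hankel (I : S -> Prop) (L : functional) : Prop :=
  [/\ dual2 L,
      (forall p, I p -> p \is 2.-homog -> pair L p = 0) &
      (forall (k : nat) (l : 'I_k -> S), (forall i, l i \is 1.-homog) ->
          0 <= pair L (\sum_(i < k) l i ^+ 2))].

Definition conv_hull (A : functional -> Prop) : functional -> Prop :=
  fun L => exists (k : nat) (lam : 'I_k -> R) (P : 'I_k -> functional),
    [/\ (forall i, 0 <= lam i), \sum_(i < k) lam i = 1, (forall i, A (P i))
      & forall m, L m = \sum_(i < k) lam i * P i m].

Definition is_convex (A : functional -> Prop) : Prop :=
  forall L1 L2 (t : R), A L1 -> A L2 -> 0 <= t <= 1 ->
    A (fun m => t * L1 m + (1 - t) * L2 m).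

Definition is_face (C F : functional -> Prop) : Prop :=
  [/\ is_convex F, (forall L, F L -> C L) &
      forall L1 L2 (t : R), C L1 -> C L2 -> 0 < t < 1 ->
        F (fun m => t * L1 m + (1 - t) * L2 m) -> F L1 /\ F L2].
End Defs.

From HB Require Import structures.
From mathcomp Require Import all_boot all_order all_algebra.
From mathcomp Require Import reals mpoly ssrcomplements.
From mathcomp Require Import ring lra zify.
From Stdlib Require Import Classical.
Set Implicit Arguments. Unset Strict Implicit. Unset Printing Implicit Defensive.
Import Order.TTheory GRing.Theory Num.Theory.
Local Open Scope ring_scope.

(** Fix L in Sigma_{X u Y}^* and let P be the projection of the linear forms
    onto (I_Y)_1 that is orthogonal for the positive semidefinite form
    (u, v) |-> L(uv).  Then L_X := L o (P (x) P) and L_Y := L - L_X lie in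
    Sigma_X^* and Sigma_Y^*, so L = 1/2 (2 L_X) + 1/2 (2 L_Y).  Both memberships
    and the face property rest on the hypothesis X n Y = Span X n Span Y: via
    saturation it says that every quadric of I_X + I_Y can be written as
    q = sum_i h_i (a_i + b_i) with linear forms a_i in I_X and b_i in I_Y, and
    then sum_i h_i b_i lies in I_X n I_Y whenever q lies in I_X.  For the face
    property, if a convex combination of L_1, L_2 in Sigma_{X u Y}^* vanishes on
    (I_X)_2 then L_1(a^2) = 0 for every linear a in I_X, so L_1(h a) = 0 by
    Cauchy-Schwarz and L_1 vanishes on (I_X)_2. *)

Section VspaceOfPred.
Variables (K : fieldType) (vT : vectType K) (P : vT -> Prop).
Hypotheses (P0 : P 0) (PD : forall u v, P u -> P v -> P (u + v))
  (PZ : forall a u, P u -> P (a *: u)).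

Lemma vspace_of_pred : exists U : {vspace vT}, forall v, v \in U <-> P v.
Proof.
suff grow (k : nat) (U : {vspace vT}) : (forall u, u \in U -> P u) -> (dim vT - \dim U < k)%N ->
    exists U' : {vspace vT}, forall v, v \in U' <-> P v.
  apply: (grow (dim vT).+1 0%VS); last by rewrite ltnS leq_subr.
  by move=> v; rewrite memv0 => /eqP ->.
elim: k U => [//|k IHk] U UP dimU.
case: (classic (forall v, P v -> v \in U)) => [PU|].
  by exists U => v; split; [exact: UP|exact: PU].
move=> /not_all_ex_not [v PvU].
have [Pv vU] : P v /\ v \notin U.
  by split; [apply: NNPP => nPv; apply: PvU => /nPv|apply/negP => vU; apply: PvU].
apply: (IHk (U + <[v]>)%VS).
  by move=> _ /memv_addP [u /UP Pu [_ /vlineP [a ->] ->]]; apply: PD => //; apply: PZ.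
have ltU : (\dim U < \dim (U + <[v]>))%N.
  by rewrite (ltn_leqif (dimv_leqif_sup (addvSl U <[v]>))) subv_add subvv -memvE.
have := dimvS (subvf (U + <[v]>)%VS); rewrite dimvf; lia.
Qed.

End VspaceOfPred.

Section OrthogonalProjection.
Variables (K : realFieldType) (vT : vectType K) (beta : {biscalar vT}).
Hypotheses (betaC : forall u v, beta u v = beta v u) (beta_psd : forall u, 0 <= beta u u).

Lemma psd_isotropic_orthogonal u v : beta u u = 0 -> beta u v = 0.
Proof.
move=> uu0; apply/eqP/negPn/negP => b0.
(* With [b := beta u v], [c := beta v v] and [s := -(c + 1) / (2 b)],
   [beta (s u + v) (s u + v) = 2 s b + c = -1]. *)
have := beta_psd ((- (beta v v + 1) / (2 * beta u v)) *: u + v).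
rewrite linearDl !linearDr !linearZl_LR !linearZr_LR uu0 (betaC v u) /=.
set b := beta u v; set c := beta v v.
by rewrite [X in 0 <= X](_ : _ = -1) ?ler0N1 //; field.
Qed.

(* Isotropic members of [E] contribute nothing, as [x / 0 = 0]. *)
Definition orth_proj (E : seq vT) u := \sum_(e <- E) (beta u e / beta e e) *: e.

Lemma orth_proj_is_linear E : linear (orth_proj E).
Proof.
move=> a u v; rewrite /orth_proj scaler_sumr -big_split; apply: eq_bigr => e _ /=.
by rewrite linearDl linearZl_LR mulrDl scalerDl scalerA mulrA.
Qed.

HB.instance Definition _ E := GRing.isLinear.Build K vT vT _ (orth_proj E)
  (orth_proj_is_linear E).

Local Notation orthogonal_seq := (pairwise (fun x y => beta x y == 0)).

Lemma orth_projP E e u : orthogonal_seq E -> e \in E -> beta e (u - orth_proj E u) = 0.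
Proof.
elim: E => [//|x E IHE]; rewrite pairwise_cons => /andP [/allP xE oE].
rewrite /orth_proj big_cons -/(orth_proj E u) opprD addrA addrAC linearBr linearZr_LR /=.
rewrite inE => /predU1P [->|eE]; last by rewrite IHE // [beta e x]betaC (eqP (xE e eE)) mulr0 subr0.
have -> : beta x (u - orth_proj E u) = beta x u.
  rewrite linearBr linear_sumr big1_seq ?subr0 // => f /andP [_ fE].
  by rewrite linearZr_LR /= (eqP (xE f fE)) mulr0.
have [xx0|xx_neq0] := eqVneq (beta x x) 0; first by rewrite xx0 mulr0 subr0 psd_isotropic_orthogonal.
by rewrite divfK // betaC subrr.
Qed.

Fixpoint gram_schmidt (X : seq vT) : seq vT :=
  if X is x :: X' then (x - orth_proj (gram_schmidt X') x) :: gram_schmidt X' else [::].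

Lemma gram_schmidt_orthogonal X : orthogonal_seq (gram_schmidt X).
Proof.
elim: X => [//|x X IHX] /=; rewrite IHX andbT.
by apply/allP => e eX; rewrite betaC orth_projP.
Qed.

Lemma span_gram_schmidt X : <<gram_schmidt X>>%VS = <<X>>%VS.
Proof.
elim: X => [//|x X IHX] /=; rewrite !span_cons IHX.
have projX : orth_proj (gram_schmidt X) x \in <<X>>%VS.
  rewrite -IHX /orth_proj big_seq; apply: rpred_sum => e eX; by rewrite rpredZ // memv_span.
apply/subv_anti/andP; rewrite !subv_add !addvSr !andbT -!memvE; split.
  apply: rpredB; first exact: (subvP (addvSl _ _)) _ (memv_line x).
  exact: (subvP (addvSr _ _)).
rewrite -[u in u \in _](subrK (orth_proj (gram_schmidt X) x)).
exact: memv_add (memv_line _) projX.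
Qed.

Lemma orth_proj_exists (W : {vspace vT}) : exists P : 'End(vT),
  [/\ forall u, P u \in W,
      forall w u, w \in W -> beta w (u - P u) = 0
    & forall u, (forall w, w \in W -> beta u w = 0) -> P u = 0].
Proof.
set E := gram_schmidt (vbasis W).
have spanE : <<E>>%VS = W by rewrite span_gram_schmidt (span_basis (vbasisP W)).
exists (linfun (orth_proj E)); split => [u|w u|u uW]; rewrite lfunE /=.
- rewrite -spanE /orth_proj big_seq; apply: rpred_sum => e eE; by rewrite rpredZ // memv_span.
- rewrite -spanE => wE; rewrite (coord_span (X := in_tuple E) wE) linear_sumlz big1 // => i _.
  by rewrite linearZl_LR /= orth_projP ?mulr0 ?gram_schmidt_orthogonal ?mem_nth.
- rewrite /orth_proj big1_seq // => e /andP [_ eE].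
  by rewrite uW ?mul0r ?scale0r // -spanE memv_span.
Qed.

End OrthogonalProjection.

Section CompDifference.
Variables (R : comRingType) (n k : nat) (s s' : n.-tuple {mpoly R[k]}).

Let in_diff_ideal (p : {mpoly R[n]}) := exists g : 'I_n -> {mpoly R[k]},
  (p \mPo s) - (p \mPo s') = \sum_i g i * (tnth s i - tnth s' i).

Let in_diff_idealD p q : in_diff_ideal p -> in_diff_ideal q -> in_diff_ideal (p + q).
Proof.
move=> [g eg] [h eh]; exists (fun i => g i + h i).
under eq_bigr do rewrite mulrDl.
by rewrite big_split -eg -eh /= !comp_mpolyD; ring.
Qed.

Let in_diff_idealZ c p : in_diff_ideal p -> in_diff_ideal (c *: p).
Proof.
move=> [g eg]; exists (fun i => c *: g i).
under eq_bigr do rewrite -scalerAl.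
by rewrite -scaler_sumr -eg !comp_mpolyZ scalerBr.
Qed.

Let in_diff_idealM p q : in_diff_ideal p -> in_diff_ideal q -> in_diff_ideal (p * q).
Proof.
move=> [g eg] [h eh]; exists (fun i => g i * (q \mPo s) + (p \mPo s') * h i).
have -> : ((p * q) \mPo s) - ((p * q) \mPo s') =
    ((p \mPo s) - (p \mPo s')) * (q \mPo s) + (p \mPo s') * ((q \mPo s) - (q \mPo s')).
  by rewrite !rmorphM /=; ring.
rewrite eg eh mulr_suml mulr_sumr -big_split; apply: eq_bigr => i _ /=; ring.
Qed.

Lemma comp_mpolyB_factor (p : {mpoly R[n]}) : exists g : 'I_n -> {mpoly R[k]},
  (p \mPo s) - (p \mPo s') = \sum_i g i * (tnth s i - tnth s' i).
Proof.
have in_diff_ideal1 : in_diff_ideal 1.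
  by exists (fun=> 0); rewrite !comp_mpoly1 subrr big1 // => i _; rewrite mul0r.
have in_diff_idealX i : in_diff_ideal 'X_i.
  exists (fun j => (j == i)%:R); rewrite !comp_mpolyXU -!tnth_nth.
  by rewrite (bigD1 i) //= eqxx mul1r big1 ?addr0 // => j /negbTE ->; rewrite mul0r.
have in_diff_ideal0 : in_diff_ideal 0.
  by exists (fun=> 0); rewrite !comp_mpoly0 subrr big1 // => i _; rewrite mul0r.
rewrite [p]mpolyE; apply: (big_ind in_diff_ideal) => // m _.
apply: in_diff_idealZ; rewrite mpolyXE_id; apply: (big_ind in_diff_ideal) => // i _.
by elim: (m i) => [|e IHe]; rewrite ?expr0 // exprS; apply: in_diff_idealM.
Qed.

End CompDifference.

Section Homogeneous.
Variables (R : ringType) (n : nat).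
Local Notation S := {mpoly R[n.+1]}.

Lemma indhomogK d (p : S) : p \is d.-homog -> val [ 'dhomog_d p ] = p.
Proof. exact: insubdK. Qed.

Lemma homog1E (u : S) : u \is 1.-homog -> u = \sum_(j < n.+1) u@_U_(j) *: 'X_j.
Proof.
move=> hu; apply/mpolyP => m; rewrite raddf_sum /=.
under eq_bigr => j _ do rewrite mcoeffZ mcoeffX.
have [/mdeg1P [i /eqP ->]|nm] := boolP (mdeg m == 1%N).
  rewrite (bigD1 i) //= eqxx mulr1 big1 ?addr0 // => j /negbTE ji.
  by rewrite eq_mnm1 ji mulr0.
rewrite (dhomog_nemf_coeff hu) // big1 // => j _.
case: eqP => [jm|]; last by rewrite mulr0.
by move: nm; rewrite -jm mdeg1.
Qed.

Lemma pihomogM_homog d e (g w : S) : w \is e.-homog ->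
  pihomog mdeg (d + e) (g * w) = pihomog mdeg d g * w.
Proof.
move=> hw; rewrite {1}(@pihomog_partitionE _ _ mdeg (msize g + d.+1) g) ?leq_addr //.
rewrite mulr_suml raddf_sum /=.
have dk : (d < msize g + d.+1)%N by rewrite addnS ltnS leq_addl.
rewrite (bigD1 (Ordinal dk)) //= big1 ?addr0; first by rewrite pihomog_dE ?dhomogM ?pihomogP.
move=> j /= nj; apply: (pihomog_ne0 (d := (j + e)%N)); last by rewrite dhomogM ?pihomogP.
by rewrite eqn_add2r; apply: contra nj => /eqP dj; apply/eqP/val_inj.
Qed.

End Homogeneous.

Section LinearForms.
Variables (R : fieldType) (n : nat).
Local Notation S := {mpoly R[n.+1]}.
Local Notation V := (dhomog n.+1 R 1).

Definition var_form (i : 'I_n.+1) : V := [ 'dhomog_1 'X_i ].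

Lemma val_var_form i : val (var_form i) = 'X_i.
Proof. by rewrite indhomogK // dhomogX; apply/eqP/mdeg1. Qed.

Lemma linear_formE (u : V) : u = \sum_j (val u)@_U_(j) *: var_form j.
Proof.
apply: val_inj; rewrite raddf_sum {1}(homog1E (dhomog_is_dhomog u)) /=.
by apply: eq_bigr => j _; rewrite -val_var_form.
Qed.

Definition subst_of (T : 'End(V)) : n.+1.-tuple S := [tuple val (T (var_form i)) | i < n.+1].

Lemma comp_subst_of T (u : V) : val u \mPo subst_of T = val (T u).
Proof.
rewrite {2}(linear_formE u) !linear_sum {1}(homog1E (dhomog_is_dhomog u)) raddf_sum /=.
apply: eq_bigr => j _.
by rewrite comp_mpolyZ comp_mpolyXU -tnth_nth tnth_map tnth_ord_tuple !linearZ.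
Qed.

Lemma comp_subst_compl_eq0 (W : {vspace V}) u :
  u \in W -> val u \mPo subst_of (\1 - projv W)%VF = 0.
Proof. by move=> uW; rewrite comp_subst_of add_lfunE opp_lfunE id_lfunE projv_id ?subrr. Qed.

Lemma var_sub_subst_compl (W : {vspace V}) i :
  'X_i - tnth (subst_of (\1 - projv W)%VF) i = val (projv W (var_form i)).
Proof.
rewrite tnth_map tnth_ord_tuple add_lfunE opp_lfunE id_lfunE raddfB /=.
by rewrite val_var_form opprK addNKr.
Qed.

End LinearForms.
Arguments var_form {R n} i.

Section QuadricSplit.
Variables (R : realType) (n : nat).
Local Notation S := {mpoly R[n.+1]}.
Local Notation V := (dhomog n.+1 R 1).
Implicit Types (I J : S -> Prop) (t : n.+1.-tuple S).

Lemma idealZ I a p : is_ideal I -> I p -> I (a *: p).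
Proof. by case=> _ _ IM Ip; rewrite -mul_mpolyC; apply: IM. Qed.

Lemma ideal_sum I k (F : 'I_k -> S) : is_ideal I -> (forall i, I (F i)) -> I (\sum_i F i).
Proof. by case=> I0 ID _ IF; elim/big_rec: _ => // i p _; apply: ID. Qed.

Lemma ideal_linear_forms_vspace I : is_ideal I -> exists U : {vspace V}, forall v, v \in U <-> I (val v).
Proof.
move=> iI; have [I0 ID _] := iI.
by apply: vspace_of_pred => // [u v Iu Iv|a u Iu]; [apply: ID|apply: idealZ].
Qed.

Lemma span_ideal_comp_eq0 I t p : (forall l, I l -> l \is 1.-homog -> l \mPo t = 0) ->
  span_ideal I p -> p \mPo t = 0.
Proof.
move=> It [k [g [l [Il ->]]]]; rewrite raddf_sum /= big1 // => i _.
by have [Ili li1] := Il i; rewrite rmorphM /= (It (l i)) ?mulr0.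
Qed.

Lemma sat_comp_eq0 J t d q : (forall p, J p -> p \mPo t = 0) -> sat J q ->
  q \is d.+1.-homog -> q \mPo t = 0.
Proof.
move=> Jt [k Jq] hq; have [[j tj_neq0]|t_eq0] := classic (exists j, tnth t j != 0).
  have := Jt _ (Jq (U_(j) *+ k)%MM _); rewrite mdegMn mdeg1 mul1n => /(_ erefl).
  rewrite rmorphM /= comp_mpolyX (bigD1 j) //= big1 ?mulr1 => [|i ij]; last first.
    by rewrite mulmnE mnm1E eq_sym (negbTE ij) mul0n expr0.
  by move/eqP; rewrite mulmnE mnm1E eqxx mul1n mulf_eq0 expf_eq0 (negbTE tj_neq0) andbF => /eqP.
rewrite comp_mpolyE big_seq big1 // => m mq.
have tE i : tnth t i = 0.
  by apply/eqP; apply: NNPP => ti; apply: t_eq0; exists i; apply/negP.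
under eq_bigr do rewrite tE.
by rewrite prodrXr -mdegE (dhomog_mf hq mq) expr0n scaler0.
Qed.

Definition quadric_split IX IY q := exists h a b : 'I_n.+1 -> V,
  [/\ forall i, IX (val (a i)), forall i, IY (val (b i))
    & q = \sum_i val (h i) * (val (a i) + val (b i))].

Lemma quadric_splitC I J q : quadric_split I J q -> quadric_split J I q.
Proof.
move=> [h [a [b [Ia Jb ->]]]]; exists h, b, a; split=> //.
by apply: eq_bigr => i _; rewrite addrC.
Qed.

Lemma form_prod_sum_homog k (h b : 'I_k -> V) : \sum_i val (h i) * val (b i) \is 2.-homog.
Proof. by apply: rpred_sum => i _; apply: (dhomogM (dhomog_is_dhomog _) (dhomog_is_dhomog _)). Qed.

Lemma quadric_split_cap I J q k (h a b : 'I_k -> V) : is_ideal I -> is_ideal J -> I q ->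
  (forall i, I (val (a i))) -> (forall i, J (val (b i))) ->
  q = \sum_i val (h i) * (val (a i) + val (b i)) ->
  ideal_cap I J (\sum_i val (h i) * val (b i)).
Proof.
move=> iI iJ Iq Ia Jb qE; have [_ ID IM] := iI; have [_ _ JM] := iJ.
split; last by apply: ideal_sum => // i; apply: JM.
have -> : \sum_i val (h i) * val (b i) = q + (-1) *: \sum_i val (h i) * val (a i).
  by rewrite qE scaleN1r -sumrB; apply: eq_bigr => i _; rewrite mulrDr addrAC subrr add0r.
by apply: ID => //; apply: idealZ => //; apply: ideal_sum => // i; apply: IM.
Qed.

Lemma sat_quadric_split IX IY q : is_ideal IX -> is_ideal IY ->
  same_subscheme (ideal_add IX IY) (ideal_add (span_ideal IX) (span_ideal IY)) ->
  q \is 2.-homog -> ideal_add IX IY q -> quadric_split IX IY q.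
Proof.
(* The substitution [x_i |-> x_i - pi x_i], with [pi] a projection onto the
   linear forms of [I_X + I_Y], kills both span ideals, hence kills [q] by
   saturation; expanding [q] around it writes [q] as [sum_i g_i (pi x_i)]. *)
move=> iX iY hS q2 XYq.
have [UX UXP] := ideal_linear_forms_vspace iX; have [UY UYP] := ideal_linear_forms_vspace iY.
pose W := (UX + UY)%VS; pose t := subst_of (\1 - projv W)%VF.
have span_comp_eq0 I (U : {vspace V}) : (forall v, v \in U <-> I (val v)) ->
    (U <= W)%VS -> forall p, span_ideal I p -> p \mPo t = 0.
  move=> UP UW p; apply: span_ideal_comp_eq0 => l Il l1.
  by rewrite -(indhomogK l1) comp_subst_compl_eq0 // (subvP UW) // UP indhomogK.
have qt : q \mPo t = 0.
  apply: (sat_comp_eq0 (J := ideal_add (span_ideal IX) (span_ideal IY))) q2.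
    move=> _ [a [b [Xa Yb ->]]].
    by rewrite raddfD /= (span_comp_eq0 _ _ UXP) ?(span_comp_eq0 _ _ UYP) ?addr0 ?addvSl ?addvSr.
  by apply/hS; exists 0%N => m /eqP; rewrite mdeg_eq0 => /eqP ->; rewrite mpolyX0 mul1r.
have [g qE] := comp_mpolyB_factor [tuple 'X_i | i < n.+1] t q.
rewrite comp_mpoly_id qt subr0 in qE.
have projW i : exists ab : V * V,
    [/\ IX (val ab.1), IY (val ab.2) & projv W (var_form i) = ab.1 + ab.2].
  have /memv_addP [a aX [b bY ->]] := memv_proj W (var_form i).
  by exists (a, b); split=> //; [apply/UXP|apply/UYP].
have [ab abP] := fin_all_exists projW.
exists (fun i => [ 'dhomog_1 (pihomog mdeg 1 (g i)) ]), (fun i => (ab i).1), (fun i => (ab i).2).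
split=> [i|i|]; try by case: (abP i).
rewrite -(pihomog_dE q2) qE raddf_sum /=; apply: eq_bigr => i _.
have [_ _ abE] := abP i.
rewrite tnth_map tnth_ord_tuple var_sub_subst_compl abE.
by rewrite (@pihomogM_homog _ _ 1 1) ?indhomogK ?pihomogP ?dhomog_is_dhomog.
Qed.

End QuadricSplit.

Section Pairing.
Variables (R : realType) (n : nat).
Local Notation S := {mpoly R[n.+1]}.
Local Notation V := (dhomog n.+1 R 1).
Implicit Types (L : functional R n) (p : S).

Lemma pair_bigE L k p : (msize p <= k)%N ->
  pair L p = \sum_(m : 'X_{1..n.+1 < k}) p@_m * L m.
Proof.
move=> size_p; pose I : subFinType _ := 'X_{1..n.+1 < k}.
rewrite /pair (big_mksub I) ?msupp_uniq //=; last first.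
  by move=> m /msize_mdeg_lt /leq_trans; apply.
by rewrite big_rmcond //= => m /memN_msupp_eq0 ->; rewrite mul0r.
Qed.

Lemma pair_is_linear L : linear_for *%R (pair L).
Proof.
move=> c p q; pose k := (msize p + msize q + msize (c *: p + q))%N.
rewrite !(@pair_bigE _ k) ?leq_addl // ?leq_addr ?(leq_trans (leq_addr _ _) (leq_addr _ _)) //.
  rewrite mulr_sumr -big_split; apply: eq_bigr => m _ /=.
  by rewrite mcoeffD mcoeffZ mulrDl mulrA.
by rewrite /k addnAC leq_addl.
Qed.

HB.instance Definition _ L := GRing.isSemilinear.Build R S R _ (pair L)
  (GRing.semilinear_linear (pair_is_linear L)).

Lemma eq_pair L1 L2 p : L1 =1 L2 -> pair L1 p = pair L2 p.
Proof. by move=> eL; apply: eq_bigr => m _; rewrite eL. Qed.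

Lemma pairZl c L p : pair (fun m => c * L m) p = c * pair L p.
Proof. by rewrite /pair mulr_sumr; apply: eq_bigr => m _; rewrite mulrCA. Qed.

Lemma pairBl L1 L2 p : pair (fun m => L1 m - L2 m) p = pair L1 p - pair L2 p.
Proof. by rewrite /pair -sumrB; apply: eq_bigr => m _; rewrite mulrBr. Qed.

Lemma pair_comb a b L1 L2 p :
  pair (fun m => a * L1 m + b * L2 m) p = a * pair L1 p + b * pair L2 p.
Proof. by rewrite /pair !mulr_sumr -big_split; apply: eq_bigr => m _ /=; ring. Qed.

Lemma pair_sum k (lam : 'I_k -> R) (Ls : 'I_k -> functional R n) p :
  pair (fun m => \sum_i lam i * Ls i m) p = \sum_i lam i * pair (Ls i) p.
Proof.
rewrite /pair; under eq_bigr do rewrite mulr_sumr.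
by rewrite exchange_big; apply: eq_bigr => i _; rewrite mulr_sumr; apply: eq_bigr => m _; ring.
Qed.

Definition hankel_form L (u v : V) := pair L (val u * val v).

Lemma hankel_formC L u v : hankel_form L u v = hankel_form L v u.
Proof. by rewrite /hankel_form mulrC. Qed.

Lemma hankel_form_is_bilinear L : bilinear_for
  (GRing.Scale.Law.clone _ _ *%R _) (GRing.Scale.Law.clone _ _ *%R _) (hankel_form L).
Proof.
split=> [v|u] a x y; rewrite /hankel_form [val (_ + _)]/(a *: val x + val y).
  by rewrite mulrDl -scalerAl linearP.
by rewrite mulrDr -scalerAr linearP.
Qed.

HB.instance Definition _ L := bilinear_isBilinear.Build R V V R _ _ (hankel_form L)
  (hankel_form_is_bilinear L).

End Pairing.

Section HankelCone.
Variables (R : realType) (n : nat).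
Local Notation S := {mpoly R[n.+1]}.
Local Notation V := (dhomog n.+1 R 1).
Implicit Types (I J : S -> Prop) (L : functional R n).

Lemma hankel_form_psd I L u : hankel I L -> 0 <= hankel_form L u u.
Proof.
case=> _ _ sos; have := sos 1%N (fun=> val u) (fun=> dhomog_is_dhomog u).
by rewrite big_ord1 expr2.
Qed.

Lemma eq_hankel I L1 L2 : L1 =1 L2 -> hankel I L1 -> hankel I L2.
Proof.
move=> eL [dL IL sosL]; split=> [m m2|p Ip p2|k l l1]; rewrite -?(eq_pair _ eL) -?eL.
- exact: dL.
- exact: IL.
- exact: sosL.
Qed.

Lemma hankel_capl I J L : hankel I L -> hankel (ideal_cap I J) L.
Proof. by case=> dL IL sosL; split=> // p [Ip _]; apply: IL. Qed.

Lemma hankel_capr I J L : hankel J L -> hankel (ideal_cap I J) L.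
Proof. by case=> dL JL sosL; split=> // p [_ Jp]; apply: JL. Qed.

Lemma hankel_capC I J L : hankel (ideal_cap I J) L -> hankel (ideal_cap J I) L.
Proof. by case=> dL IJL sosL; split=> // p [Jp Ip]; apply: IJL. Qed.

Lemma hankel_convex I : is_convex (hankel I).
Proof.
move=> L1 L2 t [d1 I1 sos1] [d2 I2 sos2] /andP [t_ge0 t_le1].
split=> [m m2|p Ip p2|k l l1]; rewrite ?pair_comb.
- by rewrite d1 // d2 // !mulr0 addr0.
- by rewrite I1 // I2 // !mulr0 addr0.
- by rewrite addr_ge0 // mulr_ge0 ?sos1 ?sos2 ?subr_ge0.
Qed.

Lemma hankel_scale I c L : 0 <= c -> hankel I L -> hankel I (fun m => c * L m).
Proof.
move=> c_ge0 [dL IL sosL]; split=> [m m2|p Ip p2|k l l1].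
- by rewrite dL ?mulr0.
- by rewrite pairZl IL ?mulr0.
- by rewrite pairZl mulr_ge0 ?sosL.
Qed.

Lemma conv_hull_hankel_cap I J L :
  conv_hull (fun L' => hankel I L' \/ hankel J L') L -> hankel (ideal_cap I J) L.
Proof.
move=> [k [lam [Ls [lam_ge0 _ hLs eL]]]].
have hLs' i : hankel (ideal_cap I J) (Ls i).
  by case: (hLs i); [apply: hankel_capl|apply: hankel_capr].
apply: eq_hankel (fun m => esym (eL m)) _; split=> [m m2|p Ip p2|r l l1].
- by rewrite big1 // => i _; have [-> // _ _] := hLs' i; rewrite mulr0.
- by rewrite pair_sum big1 // => i _; have [_ -> // _] := hLs' i; rewrite mulr0.
- by rewrite pair_sum sumr_ge0 // => i _; have [_ _ sos] := hLs' i; rewrite mulr_ge0 ?sos.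
Qed.

Lemma is_face_congr C C' F : (forall L, C L <-> C' L) -> is_face C F -> is_face C' F.
Proof.
move=> eC [convF FC faceF]; split=> // [L /FC /eC //|L1 L2 t /eC C1 /eC C2].
exact: faceF.
Qed.

Definition pullback L (T : 'End(V)) : functional R n :=
  fun m => if mdeg m == 2%N then pair L ('X_[m] \mPo subst_of T) else 0.

Lemma pair_pullback L T p : p \is 2.-homog -> pair (pullback L T) p = pair L (p \mPo subst_of T).
Proof.
move=> p2; rewrite comp_mpolyEX raddf_sum /= [in LHS]/pair !big_seq.
by apply: eq_bigr => m mp; rewrite /pullback (dhomog_mf p2 mp) eqxx linearZ.
Qed.

Lemma pullback_form L T u v : pair (pullback L T) (val u * val v) = hankel_form L (T u) (T v).
Proof.
rewrite pair_pullback ?rmorphM /= ?comp_subst_of //.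
exact: (dhomogM (dhomog_is_dhomog u) (dhomog_is_dhomog v)).
Qed.

End HankelCone.

Section HankelOfUnion.
Variables (R : realType) (n : nat) (IX IY : {mpoly R[n.+1]} -> Prop).
Local Notation V := (dhomog n.+1 R 1).
Hypotheses (iX : is_ideal IX) (iY : is_ideal IY)
  (splitXY : forall q, q \is 2.-homog -> ideal_add IX IY q -> quadric_split IX IY q).

Lemma quadric_splitX q : q \is 2.-homog -> IX q -> quadric_split IX IY q.
Proof. by move=> q2 Xq; apply: splitXY => //; exists q, 0; rewrite addr0; case: iY. Qed.

Lemma quadric_splitY q : q \is 2.-homog -> IY q -> quadric_split IX IY q.
Proof. by move=> q2 Yq; apply: splitXY => //; exists 0, q; rewrite add0r; case: iX. Qed.

Section Pullback.
Variable L : functional R n.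
Hypothesis hL : hankel (ideal_cap IX IY) L.
Variables (UY : {vspace V}) (P : 'End(V)).
Hypotheses (UYP : forall v, v \in UY <-> IY (val v)) (PUY : forall u, P u \in UY)
  (Porth : forall w u, w \in UY -> hankel_form L w (u - P u) = 0)
  (P0 : forall u, (forall w, w \in UY -> hankel_form L u w = 0) -> P u = 0).

Lemma hankel_form_cap_eq0 u v : IX (val u) -> IY (val v) -> hankel_form L u v = 0.
Proof.
have [_ IXY _] := hL; have [_ _ XM] := iX; have [_ _ YM] := iY.
move=> Xu Yv; apply: IXY; first by split; [rewrite mulrC|]; [apply: XM|apply: YM].
exact: (dhomogM (dhomog_is_dhomog u) (dhomog_is_dhomog v)).
Qed.

Lemma pullback_quadric_split q k (h a b : 'I_k -> V) :
  (forall i, IX (val (a i))) -> (forall i, IY (val (b i))) ->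
  q = \sum_i val (h i) * (val (a i) + val (b i)) ->
  pair (pullback L P) q = \sum_i hankel_form L (h i) (b i).
Proof.
move=> Xa Yb ->; rewrite raddf_sum /=; apply: eq_bigr => i _.
rewrite mulrDr raddfD /= !pullback_form.
have -> : P (a i) = 0 by apply: P0 => w /UYP; apply: hankel_form_cap_eq0.
have bY : b i \in UY by apply/UYP.
have := Porth (h i) bY; have := Porth (b i) (PUY (h i)).
rewrite linear0r add0r !linearBr /= (hankel_formC L (P (h i)) (b i)) (hankel_formC L (h i)).
lra.
Qed.

Lemma hankel_pullback : hankel IX (pullback L P).
Proof.
have [_ IXY _] := hL.
split=> [m /negbTE m2|q Xq q2|k l l1]; first by rewrite /pullback m2.
  have [h [a [b [Xa Yb qE]]]] := quadric_splitX q2 Xq.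
  rewrite (pullback_quadric_split Xa Yb qE) -raddf_sum /= IXY ?form_prod_sum_homog //.
  exact: quadric_split_cap qE.
rewrite raddf_sum /= sumr_ge0 // => i _.
by rewrite -(indhomogK (l1 i)) expr2 pullback_form (hankel_form_psd _ hL).
Qed.

Lemma hankel_sub_pullback : hankel IY (fun m => L m - pullback L P m).
Proof.
have [dL IXY _] := hL.
split=> [m m2|q Yq q2|k l l1]; rewrite ?pairBl.
- by rewrite dL // /pullback (negbTE m2) subr0.
- have [h [a [b [Xa Yb qE]]]] := quadric_splitY q2 Yq.
  have -> : pair L q = pair L (\sum_i val (h i) * val (a i)) + \sum_i hankel_form L (h i) (b i).
    rewrite qE /hankel_form -!raddf_sum -raddfD -big_split /=.
    by congr (pair L _); apply: eq_bigr => i _; rewrite mulrDr.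
  rewrite (pullback_quadric_split Xa Yb qE) addrK IXY ?form_prod_sum_homog //.
  have [Ya Xa'] : ideal_cap IY IX (\sum_i val (h i) * val (a i)).
    by apply: (quadric_split_cap iY iX Yq Yb Xa); rewrite qE; apply: eq_bigr => i _; rewrite addrC.
  by split.
rewrite !(raddf_sum (pair _)) -sumrB sumr_ge0 // => i _ /=.
rewrite -(indhomogK (l1 i)) expr2 pullback_form.
set u := [ 'dhomog_1 (l i) ].
have := Porth u (PUY u); have := hankel_form_psd (u - P u) hL.
rewrite !linearBl !linearBr /= -[pair L _]/(hankel_form L u u) (hankel_formC L u (P u)).
lra.
Qed.
End Pullback.

Lemma hankel_cap_split L : hankel (ideal_cap IX IY) L ->
  exists LX LY, [/\ hankel IX LX, hankel IY LY & forall m, L m = LX m + LY m].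
Proof.
move=> hL; have [UY UYP] := ideal_linear_forms_vspace iY.
have [P [PUY Porth P0]] := orth_proj_exists (hankel_formC L) (fun u => hankel_form_psd u hL) UY.
exists (pullback L P), (fun m => L m - pullback L P m); split.
- exact: (hankel_pullback hL UYP PUY Porth P0).
- exact: (hankel_sub_pullback hL UYP PUY Porth P0).
- by move=> m; rewrite addrC subrK.
Qed.

Lemma hankel_cap_conv_hull L :
  hankel (ideal_cap IX IY) L <-> conv_hull (fun L' => hankel IX L' \/ hankel IY L') L.
Proof.
split; last exact: conv_hull_hankel_cap.
move=> /hankel_cap_split [LX [LY [hX hY eL]]].
exists 2%N, (fun=> 2^-1), (fun i => if i == ord0 then (fun m => 2 * LX m) else (fun m => 2 * LY m)).
split=> [i|||m]; rewrite ?big_ord_recl ?big_ord0 ?big_ord1 /=.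
- by rewrite invr_ge0.
- by field.
- by case=> -[|[]] //= _; [left|right]; apply: hankel_scale.
- by rewrite eL; field.
Qed.

Lemma hankel_face_extreme L1 L2 t : hankel (ideal_cap IX IY) L1 -> hankel (ideal_cap IX IY) L2 ->
  0 < t < 1 -> hankel IX (fun m => t * L1 m + (1 - t) * L2 m) -> hankel IX L1.
Proof.
move=> hL1 hL2 /andP [t_gt0 t_lt1] [_ IXc _].
have [d1 IXY1 sos1] := hL1; have [_ _ XM] := iX; split=> // q Xq q2.
have [h [a [b [Xa Yb qE]]]] := quadric_splitX q2 Xq.
have aa0 i : hankel_form L1 (a i) (a i) = 0.
  have := IXc _ (XM _ _ (Xa i)) (dhomogM (dhomog_is_dhomog (a i)) (dhomog_is_dhomog (a i))).
  rewrite pair_comb -/(hankel_form L1 _ _) -/(hankel_form L2 _ _).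
  have := hankel_form_psd (a i) hL1; have := hankel_form_psd (a i) hL2.
  nra.
have -> : q = \sum_i val (h i) * val (a i) + \sum_i val (h i) * val (b i).
  by rewrite qE -big_split; apply: eq_bigr => i _; rewrite mulrDr.
rewrite raddfD /= (IXY1 _ (quadric_split_cap iX iY Xq Xa Yb qE)) ?form_prod_sum_homog // addr0.
rewrite raddf_sum /= big1 // => i _; rewrite -/(hankel_form L1 _ _) hankel_formC.
exact: psd_isotropic_orthogonal (hankel_formC L1) (fun u => hankel_form_psd u hL1) _ _ (aa0 i).
Qed.

Lemma hankel_cap_face : is_face (hankel (ideal_cap IX IY)) (hankel IX).
Proof.
split=> [|L|L1 L2 t hL1 hL2 t01 hc]; [exact: hankel_convex|exact: hankel_capl|split].
  exact: hankel_face_extreme hc.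
apply: (hankel_face_extreme (t := 1 - t) hL2 hL1).
  by move: t01 => /andP [t0 t1]; apply/andP; split; rewrite ?subr_gt0 // ltrBlDr ltrDl.
by apply: eq_hankel hc => m; ring.
Qed.

End HankelOfUnion.

Theorem corollary5p4 (R : realType) (n : nat) (IX IY : {mpoly R[n.+1]} -> Prop) :
  closed_subscheme IX -> closed_subscheme IY ->
  same_subscheme (ideal_add IX IY) (ideal_add (span_ideal IX) (span_ideal IY)) ->
  [/\ (forall L, hankel (ideal_cap IX IY) L <->
                 conv_hull (fun L' => hankel IX L' \/ hankel IY L') L),
      is_face (hankel (ideal_cap IX IY)) (hankel IX)
    & is_face (hankel (ideal_cap IX IY)) (hankel IY)].
Proof.
move=> [iX _ _] [iY _ _] hS.
have splitXY q : q \is 2.-homog -> ideal_add IX IY q -> quadric_split IX IY q.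
  exact: sat_quadric_split.
have splitYX q : q \is 2.-homog -> ideal_add IY IX q -> quadric_split IY IX q.
  move=> q2 [a [b [Ya Xb qE]]]; apply: quadric_splitC; apply: (splitXY _ q2).
  by exists b, a; rewrite qE addrC.
split; [exact: hankel_cap_conv_hull|exact: hankel_cap_face|].
by apply: is_face_congr (hankel_cap_face iY iX splitYX) => L; split; apply: hankel_capC.
Qed.
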